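(* In the category $P_2$, let $f:A\to X$ and $g:B\to X$ be arrows. Let $Y=\{(a,b)\in A\times B : f(a)=g(b)\}$, with the structure inherited from the product geometry $A\times B$ (identity $(e_A,e_B)$ and triple set $\Delta_{A\times B}\cap(Y\times Y\times Y)$), and let $\alpha:Y\to A$, $\alpha(a,b)=a$, and $\beta:Y\to B$, $\beta(a,b)=b$. Then $Y$ is an object of $P_2$, $\alpha,\beta$ are arrows of $P_2$ with $f\circ\alpha=g\circ\beta$, and this square is a pullback in $P_2$: for every object $Z$ and arrows $f':Z\to A$, $g':Z\to B$ of $P_2$ with $f\circ f'=g\circ g'$, there is a unique arrow $\varepsilon:Z\to Y$ of $P_2$ with $\alpha\circ\varepsilon=f'$ and $\beta\circ\varepsilon=g'$, namely $\varepsilon(x)=(f'(x),g'(x))$.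
   Context: A Pasch geometry is a triple $(A,e,\Delta_A)$ with $A$ a set, $e\in A$, $\Delta_A\subseteq A\times A\times A$, such that: (1) for each $a\in A$ there is a unique $b\in A$ with $(a,b,e)\in\Delta_A$, denoted $a^\#$; (2) $e^\#=e$ and $(a^\#)^\#=a$ for all $a$; (3) $(a,b,c)\in\Delta_A$ implies $(b,c,a)\in\Delta_A$; (4) if $(a_1,a_2,a_3),(a_1,a_4,a_5)\in\Delta_A$ then there is $a_6\in A$ with $(a_6,a_4^\#,a_2)\in\Delta_A$ and $(a_6,a_5,a_3^\#)\in\Delta_A$. A geometry is sharp if for all $a,b\in A$ there is at most one $c\in A$ with $(a,b,c)\in\Delta_A$. The product geometry $A\times B$ has identity $(e_A,e_B)$ and $\Delta_{A\times B}=\{((a_1,b_1),(a_2,b_2),(a_3,b_3)) : (a_1,a_2,a_3)\in\Delta_A,(b_1,b_2,b_3)\in\Delta_B\}$. A geometry morphism $f:A\to B$ is a map with $f(e_A)=e_B$ and $(x,y,z)\in\Delta_A\Rightarrow(f(x),f(y),f(z))\in\Delta_B$. A geometry homomorphism is a morphism $f$ such that whenever $(f(x),f(y),b)\in\Delta_B$ there exists $z\in A$ with $b=f(z)$ and $(x,y,z)\in\Delta_A$. $P_2$ is the category whose objects are sharp Pasch geometries and whose arrows are geometry homomorphisms, with composition of maps. *)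

From Stdlib Require Import ssreflect.

(* (a,b,c) ∈ Δ is written D a b c *)
Definition is_pasch_geometry {A : Type} (e : A) (D : A -> A -> A -> Prop) : Prop :=
  (* (1) for each a there is a unique b with (a,b,e) ∈ Δ  (this b is a^#) *)
  (forall a : A, exists! b : A, D a b e) /\
  (* (2) e^# = e, i.e. (e,e,e) ∈ Δ *)
  D e e e /\
  (* (2) (a^#)^# = a, i.e. (a,b,e) ∈ Δ implies (b,a,e) ∈ Δ *)
  (forall a b : A, D a b e -> D b a e) /\
  (forall a b c : A, D a b c -> D b c a) /\
  (* (4) Pasch axiom; a4^# and a3^# are expressed through witnesses *)
  (forall a1 a2 a3 a4 a5 : A, D a1 a2 a3 -> D a1 a4 a5 ->
     forall a4s a3s : A, D a4 a4s e -> D a3 a3s e ->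
     exists a6 : A, D a6 a4s a2 /\ D a6 a5 a3s).

Definition is_sharp {A : Type} (D : A -> A -> A -> Prop) : Prop :=
  forall a b c c' : A, D a b c -> D a b c' -> c = c'.

Record SPG := {
  carrier :> Type;
  unit_el : carrier;
  Delta : carrier -> carrier -> carrier -> Prop;
  spg_pasch : @is_pasch_geometry carrier unit_el Delta;
  spg_sharp : @is_sharp carrier Delta
}.

Definition is_geom_morphism {A : Type} (eA : A) (DA : A -> A -> A -> Prop)
  {B : Type} (eB : B) (DB : B -> B -> B -> Prop) (f : A -> B) : Prop :=
  f eA = eB /\ (forall x y z : A, DA x y z -> DB (f x) (f y) (f z)).

Definition is_geom_hom {A : Type} (eA : A) (DA : A -> A -> A -> Prop)
  {B : Type} (eB : B) (DB : B -> B -> B -> Prop) (f : A -> B) : Prop :=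
  is_geom_morphism eA DA eB DB f /\
  (forall (x y : A) (b : B), DB (f x) (f y) b ->
     exists z : A, b = f z /\ DA x y z).

Definition P2_arrow {A B : SPG} (f : A -> B) : Prop :=
  is_geom_hom (unit_el A) (@Delta A) (unit_el B) (@Delta B) f.

Definition PB {A B X : SPG} (f : A -> X) (g : B -> X) : Type :=
  { p : A * B | f (fst p) = g (snd p) }.

Definition PB_e {A B X : SPG} (f : A -> X) (g : B -> X)
  (hf : P2_arrow f) (hg : P2_arrow g) : PB f g.
Proof.
  exists (unit_el A, unit_el B). simpl.
  destruct hf as [[-> _] _]. destruct hg as [[-> _] _]. reflexivity.
Defined.

Definition PB_Delta {A B X : SPG} (f : A -> X) (g : B -> X)
  (p q r : PB f g) : Prop :=
  @Delta A (fst (proj1_sig p)) (fst (proj1_sig q)) (fst (proj1_sig r)) /\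
  @Delta B (snd (proj1_sig p)) (snd (proj1_sig q)) (snd (proj1_sig r)).

Definition PB_alpha {A B X : SPG} (f : A -> X) (g : B -> X) (p : PB f g) : A :=
  fst (proj1_sig p).
Definition PB_beta {A B X : SPG} (f : A -> X) (g : B -> X) (p : PB f g) : B :=
  snd (proj1_sig p).

From Stdlib Require Import ssreflect.
From Stdlib Require Import ProofIrrelevance.

(* Everything rests on one observation about a sharp
   target X: a triangle of X is determined by any two of its vertices, so if
   two triangles of A and B, pushed into X along the morphisms f and g, agree
   in two vertices, they agree in the third ([images_agree_first]).  Hence
   every triangle of A x B built from points of Y that is forced by the Pasch
   axioms (a completion a^#, or the point a6 of axiom (4)) lies again in Y,
   which makes Y a Pasch geometry; sharpness is inherited from A and B.  The
   projections are homomorphisms because a triangle of A over a pair of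
   points of Y is lifted to B through the homomorphism g (and symmetrically),
   and the pairing z |-> (f' z, g' z) is a homomorphism by sharpness of Z,
   unique because points of Y are determined by their coordinates. *)

Lemma Delta_inverse {G : SPG} (a : G) : exists! b : G, Delta G a b (unit_el G).
Proof. by case: (spg_pasch G) => inv _; apply: inv. Qed.

Lemma Delta_unit (G : SPG) : Delta G (unit_el G) (unit_el G) (unit_el G).
Proof. by case: (spg_pasch G) => _ []. Qed.

Lemma Delta_inverse_sym {G : SPG} {a b : G} :
  Delta G a b (unit_el G) -> Delta G b a (unit_el G).
Proof. by case: (spg_pasch G) => _ [_ [sym _]]; apply: sym. Qed.

Lemma Delta_rot {G : SPG} {a b c : G} : Delta G a b c -> Delta G b c a.
Proof. by case: (spg_pasch G) => _ [_ [_ [rot _]]]; apply: rot. Qed.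

Lemma Delta_pasch {G : SPG} {a1 a2 a3 a4 a5 : G} :
  Delta G a1 a2 a3 -> Delta G a1 a4 a5 ->
  forall a4s a3s : G, Delta G a4 a4s (unit_el G) -> Delta G a3 a3s (unit_el G) ->
  exists a6 : G, Delta G a6 a4s a2 /\ Delta G a6 a5 a3s.
Proof. by case: (spg_pasch G) => _ [_ [_ [_ pasch]]]; apply: pasch. Qed.

Lemma Delta_first_unique {G : SPG} {a a' b c : G} :
  Delta G a b c -> Delta G a' b c -> a = a'.
Proof. by move=> /Delta_rot H /Delta_rot H'; apply: (spg_sharp G) H H'. Qed.

Lemma images_agree_first {A B X : SPG} {f : A -> X} {g : B -> X}
    {a1 a2 a3 : A} {b1 b2 b3 : B} :
  (forall x y z : A, Delta A x y z -> Delta X (f x) (f y) (f z)) ->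
  (forall x y z : B, Delta B x y z -> Delta X (g x) (g y) (g z)) ->
  Delta A a1 a2 a3 -> Delta B b1 b2 b3 ->
  f a2 = g b2 -> f a3 = g b3 -> f a1 = g b1.
Proof.
move=> fm gm /fm Ha /gm Hb E2 E3.
by rewrite E2 E3 in Ha; apply: Delta_first_unique Ha Hb.
Qed.

Section Pullback.

Variables (A B X : SPG) (f : A -> X) (g : B -> X).
Hypotheses (hf : P2_arrow f) (hg : P2_arrow g).

Let f_unit : f (unit_el A) = unit_el X. Proof. by case: hf => [[]]. Qed.
Let g_unit : g (unit_el B) = unit_el X. Proof. by case: hg => [[]]. Qed.
Let f_morph : forall x y z : A, Delta A x y z -> Delta X (f x) (f y) (f z).
Proof. by case: hf => [[]]. Qed.
Let g_morph : forall x y z : B, Delta B x y z -> Delta X (g x) (g y) (g z).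
Proof. by case: hg => [[]]. Qed.

Local Notation Y := (PB f g).
Local Notation eY := (PB_e f g hf hg).
Local Notation DY := (PB_Delta f g).

Lemma PB_eq (p q : Y) : proj1_sig p = proj1_sig q -> p = q.
Proof.
case: p q => [p hp] [q hq] /= E; subst q.
by rewrite (proof_irrelevance _ hp hq).
Qed.

(* Axiom (1) for Y: (a,b)^# = (a^#, b^#), which lies in Y. *)
Lemma PB_sharp_inverse (y : Y) : exists! y' : Y, DY y y' eY.
Proof.
case: y => [[a b] hab] /=.
have [a' [Ha' Ua]] := Delta_inverse a.
have [b' [Hb' Ub]] := Delta_inverse b.
have E : f a' = g b'.
  apply: (images_agree_first f_morph g_morph (Delta_rot Ha') (Delta_rot Hb')).
    by rewrite f_unit g_unit.
  exact: hab.
exists (exist _ (a', b') E); split; first by split.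
move=> [[c d] hcd] [/= Hc Hd]; apply: PB_eq => /=.
by rewrite (Ua c Hc) (Ub d Hd).
Qed.

(* Axiom (4) for Y: the witness is the pair of the witnesses in A and B. *)
Lemma PB_pasch_axiom (y1 y2 y3 y4 y5 : Y) :
  DY y1 y2 y3 -> DY y1 y4 y5 ->
  forall y4s y3s : Y, DY y4 y4s eY -> DY y3 y3s eY ->
  exists y6 : Y, DY y6 y4s y2 /\ DY y6 y5 y3s.
Proof.
case: y1 y2 y3 y4 y5 => [[a1 b1] h1] [[a2 b2] h2] [[a3 b3] h3] [[a4 b4] h4] [[a5 b5] h5].
move=> [/= H123 K123] [/= H145 K145] [[a4s b4s] h4s] [[a3s b3s] h3s].
move=> [/= H4 K4] [/= H3 K3].
have [a6 [Ha1 Ha2]] := Delta_pasch H123 H145 _ _ H4 H3.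
have [b6 [Hb1 Hb2]] := Delta_pasch K123 K145 _ _ K4 K3.
have E : f a6 = g b6 by apply: (images_agree_first f_morph g_morph Ha1 Hb1).
by exists (exist _ (a6, b6) E).
Qed.

Lemma PB_pasch : is_pasch_geometry eY DY.
Proof.
split; first exact: PB_sharp_inverse.
split; first by split; apply: Delta_unit.
split; first by move=> p q [Hp Hq]; split; apply: Delta_inverse_sym.
split; last exact: PB_pasch_axiom.
by move=> p q r [Hp Hq]; split; apply: Delta_rot.
Qed.

Lemma PB_sharp : is_sharp DY.
Proof.
move=> p q r r' [Ha Hb] [Ha' Hb']; apply: PB_eq.
case: (proj1_sig r) (proj1_sig r') Ha Hb Ha' Hb' => [a b] [a' b'] /= Ha Hb Ha' Hb'.
by rewrite (spg_sharp A _ _ _ _ Ha Ha') (spg_sharp B _ _ _ _ Hb Hb').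
Qed.

(* The first projection lifts triangles: a triangle (x, y, c) of A over points
   of Y is completed in B by lifting its image along the homomorphism g. *)
Lemma PB_alpha_hom : is_geom_hom eY DY (unit_el A) (@Delta A) (PB_alpha f g).
Proof.
split; first by split=> // x y z [].
move=> [[ax bx] hx] [[ay b_y] hy] c /= Hc.
have HX : Delta X (g bx) (g b_y) (f c) by rewrite -hx -hy; apply: f_morph.
have [d [Ed Hd]] := proj2 hg _ _ _ HX.
by exists (exist _ (c, d) Ed).
Qed.

(* Symmetrically, the second projection lifts triangles through f. *)
Lemma PB_beta_hom : is_geom_hom eY DY (unit_el B) (@Delta B) (PB_beta f g).
Proof.
split; first by split=> // x y z [].
move=> [[ax bx] hx] [[ay b_y] hy] d /= Hd.
have HX : Delta X (f ax) (f ay) (g d) by rewrite hx hy; apply: g_morph.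
have [c [Ec Hc]] := proj2 hf _ _ _ HX.
by exists (exist _ (c, d) (eq_sym Ec)).
Qed.

Variables (Z : SPG) (f' : Z -> A) (g' : Z -> B).
Hypotheses (hf' : P2_arrow f') (hg' : P2_arrow g').
Hypothesis fg_commute : forall z : Z, f (f' z) = g (g' z).

Definition PB_pair (z : Z) : Y := exist _ (f' z, g' z) (fg_commute z).

(* Its lifting property: lifts through f' and g' of one triangle (x, y, _)
   coincide by sharpness of Z. *)
Lemma PB_pair_hom : is_geom_hom (unit_el Z) (@Delta Z) eY DY PB_pair.
Proof.
case: hf' => [[f'e f'm] f'l]; case: hg' => [[g'e g'm] g'l].
split; first split.
- by apply: PB_eq => /=; rewrite f'e g'e.
- by move=> x y z H; split; [apply: f'm | apply: g'm].
- move=> x y [[a b] hab] [/= Ha Hb].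
  have [z1 [E1 K1]] := f'l _ _ _ Ha.
  have [z2 [E2 K2]] := g'l _ _ _ Hb.
  rewrite (spg_sharp Z _ _ _ _ K2 K1) in E2.
  by exists z1; split=> //; apply: PB_eq; rewrite /= E1 E2.
Qed.

Lemma PB_pair_unique (eps : Z -> Y) :
  (forall z, PB_alpha f g (eps z) = f' z) ->
  (forall z, PB_beta f g (eps z) = g' z) ->
  forall z, eps z = PB_pair z.
Proof.
move=> Ha Hb z; apply: PB_eq => /=.
by rewrite -(Ha z) -(Hb z) /PB_alpha /PB_beta; case: (proj1_sig (eps z)).
Qed.

End Pullback.

Arguments PB_pair {A B X f g Z f' g'} fg_commute z.

Theorem theorem3p8 (A B X : SPG) (f : A -> X) (g : B -> X)
  (hf : P2_arrow f) (hg : P2_arrow g) :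
  let Y := PB f g in
  let eY := PB_e f g hf hg in
  let DY := PB_Delta f g in
  (* Y is an object of P_2 *)
  (is_pasch_geometry eY DY /\ is_sharp DY) /\
  (* alpha, beta are arrows of P_2 *)
  is_geom_hom eY DY (unit_el A) (@Delta A) (PB_alpha f g) /\
  is_geom_hom eY DY (unit_el B) (@Delta B) (PB_beta f g) /\
  (* the square commutes *)
  (forall y : Y, f (PB_alpha f g y) = g (PB_beta f g y)) /\
  (* universal property *)
  (forall (Z : SPG) (f' : Z -> A) (g' : Z -> B),
     P2_arrow f' -> P2_arrow g' ->
     (forall z : Z, f (f' z) = g (g' z)) ->
     exists eps : Z -> Y,
       is_geom_hom (unit_el Z) (@Delta Z) eY DY eps /\
       (forall z : Z, PB_alpha f g (eps z) = f' z) /\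
       (forall z : Z, PB_beta f g (eps z) = g' z) /\
       (forall z : Z, proj1_sig (eps z) = (f' z, g' z)) /\
       (forall eps' : Z -> Y,
          is_geom_hom (unit_el Z) (@Delta Z) eY DY eps' ->
          (forall z : Z, PB_alpha f g (eps' z) = f' z) ->
          (forall z : Z, PB_beta f g (eps' z) = g' z) ->
          forall z : Z, eps' z = eps z)).
Proof.
move=> Y eY DY.
split; first by split; [exact: PB_pasch | exact: PB_sharp].
split; first exact: PB_alpha_hom.
split; first exact: PB_beta_hom.
split; first by case.
move=> Z f' g' hf' hg' hc.
exists (PB_pair hc); split; first exact: PB_pair_hom.
do 3 (split; first by []).
by move=> eps' _; apply: PB_pair_unique.
Qed.
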